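(* Let $m\ge1$, $n=2^m-1$ and $\iota,\kappa\in\dot F^m$. Every element $\bar c$ of the linear span $\langle R_\iota,R_\kappa\rangle$ of $R_\iota\cup R_\kappa$ satisfies $$c_\alpha+c_{\alpha+\iota}+c_{\alpha+\kappa}+c_{\alpha+\iota+\kappa}=0 \quad\text{for all } \alpha\in F^m\setminus\langle\iota,\kappa\rangle,$$ where $\langle\iota,\kappa\rangle$ is the linear span of $\iota,\kappa$ in $F^m$.
   Context: $F^m$ denotes the vector space of binary $m$-tuples over $GF(2)$, and $\dot F^m := F^m\setminus\{0^m\}$. The coordinates of words $\bar c\in F^n$ ($n=2^m-1$) are indexed by the elements of $\dot F^m$, $\bar c=\{c_\alpha\}_{\alpha\in\dot F^m}$. The Hamming code is $H:=\{\bar c\in F^n \mid \sum_{\alpha\in\dot F^m} c_\alpha\alpha = 0^m\}$. For $\iota\in\dot F^m$, $R_\iota := \{\bar c\in H \mid c_\alpha=c_{\alpha+\iota} \text{ for all } \alpha\in F^m\setminus\{0^m,\iota\}\}$; it is a linear subspace of $F^n$. *)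

From HB Require Import structures.
From mathcomp Require Import all_boot all_order all_algebra.
Set Implicit Arguments. Unset Strict Implicit. Unset Printing Implicit Defensive.
Import GRing.Theory.
Local Open Scope ring_scope.

Definition Fm (m : nat) := 'rV['F_2]_m.
Definition dotF (m : nat) := {x : 'rV['F_2]_m | x != 0}.

(* binary words of length n = 2^m - 1, coordinates indexed by dot F^m *)
Notation word m := {ffun dotF m -> 'F_2} (only parsing).

(* coordinate c_alpha for alpha in F^m (only meaningful for alpha != 0;
   returns 0 at alpha = 0, which is never used in the statement) *)
Definition cw (m : nat) (c : word m) (a : 'rV['F_2]_m) : 'F_2 :=
  oapp c 0 (insub a : option (dotF m)).

Definition hamming (m : nat) (c : word m) : Prop :=
  \sum_(a : dotF m) c a *: val a = 0.

Definition Rsub (m : nat) (iota : 'rV['F_2]_m) (c : word m) : Prop :=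
  hamming c /\
  forall a : 'rV['F_2]_m, a != 0 -> a != iota -> cw c a = cw c (a + iota).

Inductive span_of (m : nat) (P : word m -> Prop) : word m -> Prop :=
| span_zero : span_of P 0
| span_gen : forall x, P x -> span_of P x
| span_lin : forall (k : 'F_2) x y, span_of P x -> span_of P y -> span_of P [ffun a => k * x a + y a].

(* On a word of R_iota the coordinates at alpha and alpha + iota agree, so the
   four-term sum pairs off as (c_alpha + c_(alpha+iota)) + (c_(alpha+kappa) +
   c_(alpha+kappa+iota)) = 0 in characteristic 2, provided alpha and
   alpha + kappa avoid 0 and iota, as they do for alpha outside <iota, kappa>.  The sum is
   symmetric in iota and kappa, so the same holds on R_kappa, and it is linear in
   the word, so it vanishes on the whole span. *)

From HB Require Import structures.
From mathcomp Require Import all_boot all_order all_algebra.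
From mathcomp Require Import ring.
Set Implicit Arguments.
Unset Strict Implicit.
Unset Printing Implicit Defensive.
Import GRing.Theory.
Local Open Scope ring_scope.

Lemma addrr_F2 (p : 'F_2) : p + p = 0.
Proof. by apply: addrr_pchar2; apply: pchar_Fp. Qed.

Lemma cw0 m (a : 'rV['F_2]_m) : cw (0 : word m) a = 0.
Proof. by rewrite /cw; case: insubP => [u _ _|_] /=; rewrite ?ffunE. Qed.

Lemma cw_lin m (k : 'F_2) (x y : word m) (a : 'rV['F_2]_m) :
  cw [ffun b => k * x b + y b] a = k * cw x a + cw y a.
Proof.
by rewrite /cw; case: insubP => [u _ _|_] /=; rewrite ?ffunE ?mulr0 ?addr0.
Qed.

Section QuadSum.

Variables (m : nat) (iota kappa : 'rV['F_2]_m).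
Implicit Types (c x y : word m) (a : 'rV['F_2]_m).

Definition quad_sum c a :=
  cw c a + cw c (a + iota) + cw c (a + kappa) + cw c (a + iota + kappa).

Lemma quad_sum0 a : quad_sum 0 a = 0.
Proof. by rewrite /quad_sum !cw0 !addr0. Qed.

Lemma quad_sum_lin (k : 'F_2) x y a :
  quad_sum [ffun b => k * x b + y b] a = k * quad_sum x a + quad_sum y a.
Proof. by rewrite /quad_sum !cw_lin; ring. Qed.

Lemma quad_sum_Rsub c a :
  Rsub iota c -> a != 0 -> a != iota -> a + kappa != 0 -> a + kappa != iota ->
  quad_sum c a = 0.
Proof.
move=> [_ c_inv] a0 ai ak0 aki.
rewrite /quad_sum c_inv // [cw c (a + kappa)]c_inv // [a + iota + kappa]addrAC.
by rewrite addrr_F2 add0r addrr_F2.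
Qed.

End QuadSum.

Lemma quad_sumC m (iota kappa : 'rV['F_2]_m) (c : word m) a :
  quad_sum iota kappa c a = quad_sum kappa iota c a.
Proof. by rewrite /quad_sum [a + kappa + iota]addrAC; ring. Qed.

Lemma notin_vspace_addr (K : fieldType) (vT : vectType K) (U : {vspace vT}) a u :
  a \notin U -> u \in U -> a + u \notin U.
Proof. by move=> aU uU; apply: contra aU => auU; rewrite -(addrK u a) memvB. Qed.

Theorem lemma2 (m : nat) (iota kappa : 'rV['F_2]_m) :
  (1 <= m)%N -> iota != 0 -> kappa != 0 ->
  forall c : word m,
    span_of (fun x => Rsub iota x \/ Rsub kappa x) c ->
    forall a : 'rV['F_2]_m, a \notin <<[:: iota; kappa]>>%VS ->
      cw c a + cw c (a + iota) + cw c (a + kappa) + cw c (a + iota + kappa) = 0.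
Proof.
move=> _ _ _ c span_c a aS; rewrite -/(quad_sum iota kappa c a).
set S := <<[:: iota; kappa]>>%VS.
have iS : iota \in S by apply: memv_span; rewrite inE eqxx.
have kS : kappa \in S by apply: memv_span; rewrite !inE eqxx orbT.
have avoid u w : u \in S -> w \in S -> a + u != w.
  by move=> uS wS; apply: contraNneq (notin_vspace_addr aS uS) => ->.
have a_avoid w : w \in S -> a != w by rewrite -{1}[a]addr0; apply/avoid/mem0v.
elim: span_c => [|x [Rx|Rx]|k x y _ IHx _ IHy].
- exact: quad_sum0.
- by apply: quad_sum_Rsub; rewrite ?a_avoid ?avoid ?mem0v.
- by rewrite quad_sumC; apply: quad_sum_Rsub; rewrite ?a_avoid ?avoid ?mem0v.
- by rewrite quad_sum_lin IHx IHy mulr0 addr0.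
Qed.
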